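(* Let $p\ge 4$ and let $I$ consist of one of the configurations $(3,3,1)$ or $(3,2,2)$ (numbers of chips of the three colors) together with $2p-7$ additional colored chips all of a single color, and no jokers or dominoes. Then there is a sequence of exactly $5p-12$ exchanges taking $I$ to a configuration with $p$ dominoes.
   Context: Game model: a configuration is a tuple $(a,b,c,x,d)$ of nonnegative integers: $a,b,c$ colored chips of three colors, $x$ jokers, $d$ dominoes. Exchanges: Rule 1: remove three chips, consisting of some number $j\in\{0,1,2,3\}$ of jokers together with $3-j$ colored chips of pairwise distinct colors, and add one domino and one joker. Rule 2: if $d\ge 3$, remove three dominoes and add seven jokers. *)

From Stdlib Require Import Arith List Permutation.
Import ListNotations.

(* A configuration (a,b,c,x,d): a,b,c colored chips of three colors,
   x jokers, d dominoes. *)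
Record config := Config { ca : nat; cb : nat; cc : nat; cx : nat; cd : nat }.

(* Rule 1: remove ea+eb+ec colored chips (at most one of each color, so the
   colors are pairwise distinct) together with j jokers, where
   ea+eb+ec+j = 3; add one domino and one joker. *)
Inductive exchange : config -> config -> Prop :=
| rule1 : forall a b c x d ea eb ec j,
    ea <= 1 -> eb <= 1 -> ec <= 1 -> ea + eb + ec + j = 3 ->
    exchange (Config (a + ea) (b + eb) (c + ec) (x + j) d)
             (Config a b c (x + 1) (d + 1))
| rule2 : forall a b c x d,
    exchange (Config a b c x (d + 3)) (Config a b c (x + 7) d).

Inductive exchanges : nat -> config -> config -> Prop :=
| ex_nil : forall C, exchanges 0 C C
| ex_cons : forall n C C' C'', exchange C C' -> exchanges n C' C'' ->
    exchanges (S n) C C''.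

(* The sequence is built in two phases.
   - Base (p = 4): any configuration with 8 colored chips, between 1 and 4 of
     each color, and nothing else reaches (0,0,0,1,4) in 8 exchanges: three
     "greedy" exchanges (one chip of every present color, completed by
     jokers), one application of Rule 2, and four more greedy exchanges.
     This is checked by evaluating the greedy schedule on the 12 such
     configurations.
   - Loop: with at least 3 dominoes, a cycle of 5 exchanges (Rule 2, two
     exchanges "one chip + two jokers", two exchanges "three jokers")
     spends 2 chips of a color and gains one domino and one joker.
   Exchanges are invariant under adding the same colored chips to both ends,
   so the base run can carry the 2(p-4) chips spent later by the loop, and
   under a cyclic renaming of the colors, so it suffices to treat extra chips
   of the first color. *)

From Stdlib Require Import Arith List Permutation Lia.
Import ListNotations.

Lemma exchanges_trans n m C1 C2 C3 :
  exchanges n C1 C2 -> exchanges m C2 C3 -> exchanges (n + m) C1 C3.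
Proof.
  intros H12 H23; induction H12 as [C | n C C' C'' Hstep _ IH]; simpl.
  - exact H23.
  - exact (ex_cons _ _ _ _ Hstep (IH H23)).
Qed.

(* Rule 1 with the target given by equations, so that it applies to
   configurations written in any arithmetic form. *)
Lemma rule1_exchange a b c x d a' b' c' x' d' ea eb ec j :
  ea <= 1 -> eb <= 1 -> ec <= 1 -> ea + eb + ec + j = 3 ->
  a = a' + ea -> b = b' + eb -> c = c' + ec ->
  j <= x -> x' = x - j + 1 -> d' = d + 1 ->
  exchange (Config a b c x d) (Config a' b' c' x' d').
Proof.
  intros Hea Heb Hec Hsum -> -> -> Hj -> ->.
  replace x with (x - j + j) at 1 by lia.
  apply rule1; assumption.
Qed.

Lemma rule2_exchange a b c x d x' d' :
  d = d' + 3 -> x' = x + 7 -> exchange (Config a b c x d) (Config a b c x' d').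
Proof. intros -> ->; apply rule2. Qed.

Definition add_colored (e1 e2 e3 : nat) (C : config) : config :=
  Config (ca C + e1) (cb C + e2) (cc C + e3) (cx C) (cd C).

Lemma exchanges_add_colored n e1 e2 e3 C C' :
  exchanges n C C' -> exchanges n (add_colored e1 e2 e3 C) (add_colored e1 e2 e3 C').
Proof.
  assert (Hstep : forall C C', exchange C C' ->
            exchange (add_colored e1 e2 e3 C) (add_colored e1 e2 e3 C')).
  { intros ? ? []; unfold add_colored; simpl.
    - apply (rule1_exchange _ _ _ _ _ _ _ _ _ _ ea eb ec j); lia.
    - apply rule2_exchange; lia. }
  induction 1; econstructor; eauto.
Qed.

Definition rotate_colors (C : config) : config :=
  Config (cc C) (ca C) (cb C) (cx C) (cd C).

(* The rules treat the three colors symmetrically. *)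
Lemma exchanges_rotate_colors n C C' :
  exchanges n C C' -> exchanges n (rotate_colors C) (rotate_colors C').
Proof.
  assert (Hstep : forall C C', exchange C C' ->
            exchange (rotate_colors C) (rotate_colors C')).
  { intros ? ? []; simpl.
    - apply rule1; lia.
    - apply rule2. }
  induction 1; econstructor; eauto.
Qed.

Lemma reach_dominoes_rotate n C p :
  (exists C', exchanges n C C' /\ cd C' = p) ->
  exists C', exchanges n (rotate_colors C) C' /\ cd C' = p.
Proof.
  intros [C' [HC Hp]].
  exists (rotate_colors C'); split; [apply exchanges_rotate_colors | ]; assumption.
Qed.

Definition colors_present (C : config) : nat :=
  min (ca C) 1 + min (cb C) 1 + min (cc C) 1.

(* The greedy exchange: one chip of every present color, completed by jokers. *)
Definition greedy (C : config) : config :=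
  Config (ca C - 1) (cb C - 1) (cc C - 1) (cx C + colors_present C - 2) (cd C + 1).

Lemma greedy_exchange C :
  3 <= cx C + colors_present C -> exchange C (greedy C).
Proof.
  destruct C as [a b c x d]; unfold greedy, colors_present; simpl; intro Hx.
  apply (rule1_exchange _ _ _ _ _ _ _ _ _ _
           (min a 1) (min b 1) (min c 1) (3 - (min a 1 + min b 1 + min c 1))); lia.
Qed.

Fixpoint greedy_iter (n : nat) (C : config) : config :=
  match n with 0 => C | S n => greedy_iter n (greedy C) end.

Fixpoint greedy_legal (n : nat) (C : config) : bool :=
  match n with
  | 0 => true
  | S n => (3 <=? cx C + colors_present C) && greedy_legal n (greedy C)
  end.

Lemma greedy_run n C :
  greedy_legal n C = true -> exchanges n C (greedy_iter n C).
Proof.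
  revert C; induction n as [|n IH]; intros C Hlegal; cbn [greedy_legal greedy_iter] in *.
  - constructor.
  - apply Bool.andb_true_iff in Hlegal as [Hx Hrest].
    apply Nat.leb_le in Hx.
    exact (ex_cons _ _ _ _ (greedy_exchange C Hx) (IH _ Hrest)).
Qed.

Definition discard (C : config) : config :=
  Config (ca C) (cb C) (cc C) (cx C + 7) (cd C - 3).

Lemma discard_exchange C : 3 <= cd C -> exchange C (discard C).
Proof. destruct C; unfold discard; simpl; intro; apply rule2_exchange; lia. Qed.

Definition base_schedule (C : config) : config :=
  greedy_iter 4 (discard (greedy_iter 3 C)).

Definition base_schedule_legal (C : config) : bool :=
  greedy_legal 3 C && (3 <=? cd (greedy_iter 3 C))
  && greedy_legal 4 (discard (greedy_iter 3 C)).

Lemma base_schedule_run C :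
  base_schedule_legal C = true -> exchanges 8 C (base_schedule C).
Proof.
  unfold base_schedule_legal, base_schedule.
  intros Hlegal; apply Bool.andb_true_iff in Hlegal as [Hlegal H4].
  apply Bool.andb_true_iff in Hlegal as [H3 Hd]; apply Nat.leb_le in Hd.
  exact (exchanges_trans 3 5 _ _ _ (greedy_run 3 C H3)
           (ex_cons _ _ _ _ (discard_exchange _ Hd) (greedy_run 4 _ H4))).
Qed.

Lemma base_case a b c :
  1 <= a <= 4 -> 1 <= b <= 4 -> 1 <= c <= 4 -> a + b + c = 8 ->
  exchanges 8 (Config a b c 0 0) (Config 0 0 0 1 4).
Proof.
  intros Ha Hb Hc Hsum.
  destruct a as [|[|[|[|[|a]]]]]; try lia;
  destruct b as [|[|[|[|[|b]]]]]; try lia;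
  destruct c as [|[|[|[|[|c]]]]]; try lia;
  apply base_schedule_run; reflexivity.
Qed.

Lemma cycle a b c x d :
  exchanges 5 (Config (2 + a) b c x (3 + d)) (Config a b c (1 + x) (4 + d)).
Proof.
  apply ex_cons with (Config (2 + a) b c (7 + x) d);
    [apply rule2_exchange; lia |].
  apply ex_cons with (Config (1 + a) b c (6 + x) (1 + d));
    [apply (rule1_exchange _ _ _ _ _ _ _ _ _ _ 1 0 0 2); lia |].
  apply ex_cons with (Config a b c (5 + x) (2 + d));
    [apply (rule1_exchange _ _ _ _ _ _ _ _ _ _ 1 0 0 2); lia |].
  apply ex_cons with (Config a b c (3 + x) (3 + d));
    [apply (rule1_exchange _ _ _ _ _ _ _ _ _ _ 0 0 0 3); lia |].
  apply ex_cons with (Config a b c (1 + x) (4 + d));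
    [apply (rule1_exchange _ _ _ _ _ _ _ _ _ _ 0 0 0 3); lia |].
  constructor.
Qed.

Lemma cycles k a b c x d :
  exchanges (5 * k) (Config (2 * k + a) b c x (3 + d))
                    (Config a b c (k + x) (3 + k + d)).
Proof.
  revert x d; induction k as [|k IH]; intros x d.
  - constructor.
  - replace (5 * S k) with (5 + 5 * k) by lia.
    replace (2 * S k + a) with (2 + (2 * k + a)) by lia.
    apply (exchanges_trans _ _ _ _ _ (cycle _ _ _ _ _)).
    replace (Config a b c (S k + x) (3 + S k + d))
      with (Config a b c (k + (1 + x)) (3 + k + (1 + d))) by (f_equal; lia).
    replace (4 + d) with (3 + (1 + d)) by lia.
    apply IH.
Qed.

Lemma extra_chips_first_color p a0 b0 c0 :
  4 <= p -> 1 <= a0 <= 3 -> 1 <= b0 <= 3 -> 1 <= c0 <= 3 -> a0 + b0 + c0 = 7 ->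
  exists C, exchanges (5 * p - 12) (Config (a0 + (2 * p - 7)) b0 c0 0 0) C /\ cd C = p.
Proof.
  intros Hp Ha Hb Hc Hsum.
  destruct (Nat.le_exists_sub 4 p Hp) as (k & -> & _).
  assert (Hbase := exchanges_add_colored _ (2 * k) 0 0 _ _
                     (base_case (a0 + 1) b0 c0 ltac:(lia) ltac:(lia) ltac:(lia) ltac:(lia))).
  assert (Hloop := cycles k 0 0 0 1 1).
  unfold add_colored in Hbase; cbn [ca cb cc cx cd] in Hbase.
  rewrite Nat.add_0_r in Hloop.
  exists (Config 0 0 0 (k + 1) (3 + k + 1)); split; [| simpl; lia].
  replace (5 * (k + 4) - 12) with (8 + 5 * k) by lia.
  replace (Config (a0 + (2 * (k + 4) - 7)) b0 c0 0 0)
    with (Config (a0 + 1 + 2 * k) (b0 + 0) (c0 + 0) 0 0) by (f_equal; lia).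
  exact (exchanges_trans _ _ _ _ _ Hbase Hloop).
Qed.

Lemma initial_counts a0 b0 c0 :
  Permutation [a0; b0; c0] [3; 3; 1] \/ Permutation [a0; b0; c0] [3; 2; 2] ->
  1 <= a0 <= 3 /\ 1 <= b0 <= 3 /\ 1 <= c0 <= 3 /\ a0 + b0 + c0 = 7.
Proof.
  assert (Hcounts : forall l, Permutation [a0; b0; c0] l ->
            Forall (fun n => 1 <= n <= 3) l -> list_sum l = 7 ->
            1 <= a0 <= 3 /\ 1 <= b0 <= 3 /\ 1 <= c0 <= 3 /\ a0 + b0 + c0 = 7).
  { intros l Hperm Hbounds Hsum.
    apply (Permutation_Forall (Permutation_sym Hperm)) in Hbounds.
    rewrite <- (Permutation_list_sum Hperm) in Hsum.
    inversion_clear Hbounds as [| ? ? Ha Hbc]; inversion_clear Hbc as [| ? ? Hb Hc'].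
    inversion_clear Hc' as [| ? ? Hc _]; simpl in Hsum; lia. }
  intros [Hperm | Hperm]; apply (Hcounts _ Hperm); repeat constructor; lia.
Qed.

Theorem mainTheorem6 (p a0 b0 c0 ea eb ec : nat) :
  4 <= p ->
  (Permutation [a0; b0; c0] [3; 3; 1] \/ Permutation [a0; b0; c0] [3; 2; 2]) ->
  ((ea, eb, ec) = (2 * p - 7, 0, 0) \/ (ea, eb, ec) = (0, 2 * p - 7, 0) \/
   (ea, eb, ec) = (0, 0, 2 * p - 7)) ->
  exists C : config,
    exchanges (5 * p - 12) (Config (a0 + ea) (b0 + eb) (c0 + ec) 0 0) C /\
    cd C = p.
Proof.
  intros Hp Hinit Hextra.
  apply initial_counts in Hinit as (Ha & Hb & Hc & Hsum).
  destruct Hextra as [Hextra | [Hextra | Hextra]]; injection Hextra as Hea Heb Hec; subst ea eb ec.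
  - rewrite (Nat.add_0_r b0), (Nat.add_0_r c0).
    apply extra_chips_first_color; lia.
  -
    rewrite (Nat.add_0_r a0), (Nat.add_0_r c0).
    apply (reach_dominoes_rotate _ (Config (b0 + (2 * p - 7)) c0 a0 0 0)).
    apply extra_chips_first_color; lia.
  -
    rewrite (Nat.add_0_r a0), (Nat.add_0_r b0).
    apply (reach_dominoes_rotate _ (Config b0 (c0 + (2 * p - 7)) a0 0 0)).
    apply (reach_dominoes_rotate _ (Config (c0 + (2 * p - 7)) a0 b0 0 0)).
    apply extra_chips_first_color; lia.
Qed.
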